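(* Let $n\ge 1$, $X=\{1,\dots,n\}$, and identify the algebra $\mathcal{A}$ of functions $X\to\mathbb{R}$ (pointwise operations) with $\mathbb{R}^n$ with componentwise multiplication; let $e_1,\dots,e_n$ be the standard basis. Let $\sigma:X\to X$ be a bijection and $\tilde{\sigma}(f)=f\circ\sigma^{-1}$ the induced automorphism. Let $\Delta:\mathbb{R}^n\to\mathbb{R}^n$ be a linear operator whose standard matrix $[k_{li}]$ (with $k_{li}$ the $l$-th component of $\Delta(e_i)$) satisfies: (1) $k_{li}=0$ whenever $l\notin\{i,\sigma(i)\}$; (2) for every $i\in X$, writing $j=\sigma(i)$, $k_{ji}=-k_{jj}$. Then $\Delta$ is a $\tilde{\sigma}$-derivation, i.e. $\Delta(fg)=\tilde{\sigma}(f)\Delta(g)+\Delta(f)g$ for all $f,g\in\mathbb{R}^n$.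
   Context: Note $\tilde{\sigma}(e_i)=e_{\sigma(i)}$. *)

From HB Require Import structures.
From mathcomp Require Import all_boot all_order all_algebra all_fingroup.
From mathcomp Require Import reals.
Set Implicit Arguments. Unset Strict Implicit. Unset Printing Implicit Defensive.
Import GRing.Theory Num.Theory.
Local Open Scope ring_scope.

(* R^n (functions X -> R, X = 'I_n) represented as row vectors 'rV[R]_n. *)

Definition mulv (R : realType) (n : nat) (f g : 'rV[R]_n) : 'rV[R]_n :=
  \row_x (f 0 x * g 0 x).

Definition basis_e (R : realType) (n : nat) (i : 'I_n) : 'rV[R]_n :=
  delta_mx 0 i.

Definition sigma_tilde (R : realType) (n : nat) (s : 'S_n) (f : 'rV[R]_n)
  : 'rV[R]_n := \row_x f 0 ((s^-1)%g x).

Definition kcoef (R : realType) (n : nat) (D : 'rV[R]_n -> 'rV[R]_n)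
  (l i : 'I_n) : R := D (basis_e R i) 0 l.

From HB Require Import structures.
From mathcomp Require Import all_boot all_order all_algebra all_fingroup.
From mathcomp Require Import reals.
From mathcomp Require Import ring lra.
Import GRing.Theory Num.Theory.
Local Open Scope ring_scope.

(* The hypotheses say that column i of the matrix of Delta is supported on
   {i, s i}, and row l then has at most the two entries k_{l l} and
   k_{l j} = - k_{l l}, where j = s^-1 l.  Hence
   Delta(f)_l = k_{l l} (f_l - f_{s^-1 l}), i.e. Delta = K (id - sigma~) for the
   diagonal K = diag(k_{l l}).  As sigma~ is multiplicative,
   fg - sigma~(f) sigma~(g) = sigma~(f) (g - sigma~ g) + (f - sigma~ f) g,
   and multiplying by the diagonal K preserves this identity. *)

Lemma linear_kcoefE (R : realType) (n : nat) (D : {linear 'rV[R]_n -> 'rV[R]_n})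
  (f : 'rV[R]_n) (l : 'I_n) :
  D f 0 l = \sum_i f 0 i * kcoef D l i.
Proof.
rewrite {1}[f]row_sum_delta linear_sum summxE.
by apply: eq_bigr => i _; rewrite linearZ mxE.
Qed.

Section TwistedDifference.

Variables (R : realType) (n : nat) (s : 'S_n) (D : {linear 'rV[R]_n -> 'rV[R]_n}).
Hypothesis kcoef_off_support :
  forall l i : 'I_n, l != i -> l != s i -> kcoef D l i = 0.
Hypothesis kcoef_image : forall i : 'I_n, kcoef D (s i) i = - kcoef D (s i) (s i).

Local Notation pre l := ((s^-1)%g l).

Lemma kcoef_row_off (l i : 'I_n) : i != l -> i != pre l -> kcoef D l i = 0.
Proof.
move=> nil nij; apply: kcoef_off_support; first by rewrite eq_sym.
by apply: contra nij => /eqP->; rewrite permK.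
Qed.

Lemma kcoef_pre (l : 'I_n) : kcoef D l (pre l) = - kcoef D l l.
Proof. by have := kcoef_image (pre l); rewrite permKV. Qed.

Lemma kcoef_diag_fixed (l : 'I_n) : pre l = l -> kcoef D l l = 0.
Proof. by move=> fix_l; have := kcoef_pre l; rewrite fix_l; lra. Qed.

Lemma twisted_differenceE (f : 'rV[R]_n) (l : 'I_n) :
  D f 0 l = kcoef D l l * (f 0 l - f 0 (pre l)).
Proof.
rewrite linear_kcoefE (bigD1 l) //=.
have [fix_l|nfix_l] := eqVneq (pre l) l.
  rewrite fix_l kcoef_diag_fixed // subrr !mulr0 add0r.
  by rewrite big1 // => i nil; rewrite kcoef_row_off ?mulr0 ?fix_l.
rewrite (bigD1 (pre l)) ?nfix_l //= big1 ?addr0 ?kcoef_pre.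
  by ring.
by move=> i /andP[nil nij]; rewrite kcoef_row_off ?mulr0.
Qed.

End TwistedDifference.

Arguments twisted_differenceE {R n s D}.

Theorem theorem2 (R : realType) (n : nat) (hn : (1 <= n)%N) (s : 'S_n)
  (D : {linear 'rV[R]_n -> 'rV[R]_n})
  (h1 : forall l i : 'I_n, l != i -> l != s i -> kcoef D l i = 0)
  (h2 : forall i : 'I_n, kcoef D (s i) i = - kcoef D (s i) (s i)) :
  forall f g : 'rV[R]_n,
    D (mulv f g) = mulv (sigma_tilde s f) (D g) + mulv (D f) g.
Proof.
move=> f g; apply/rowP => l.
rewrite !mxE !(twisted_differenceE h1 h2) !mxE.
ring.
Qed.
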